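(* Let $\mathbb{F}\in\{\mathbb{R},\mathbb{C}\}$, let $A_1,A_2,\ldots$ be a sequence of matrices in $\mathbb{F}^{n\times n}$, let $H$ be a subspace of $\mathbb{F}^n$ invariant under every $A_i$, and let $\nu$ be a vector norm on $\mathbb{F}^n$. Suppose that $\sum_{i=1}^\infty(\max(\nu^0_H(A_i),1)-1)$ converges and that $\sum_{i=1}^\infty(1-\min(\nu^0_H(A_i),1))$ diverges. Let $(C_{p,r})_{r\ge1}$ be any sequence of general products from $A_1,A_2,\ldots$ (as defined below). Then for every $x\in H$, $\lim_{r\to\infty}C_{p,r}x=0$.
   Context: For a subspace $H$ invariant under $A$, the partial norm is $\nu^0_H(A)=\sup_{0\neq x\in H}\nu(Ax)/\nu(x)$ (the operator norm of the restriction of $A$ to $H$). General products: given a permutation $\sigma$ of the positive integers, set $B_i=A_{\sigma(i)}$; for an integer $p\ge0$ and each $r\ge1$, $C_{p,r}$ is a product of the matrices $B_{p+1},\ldots,B_{p+r}$, each used exactly once, taken in some order (the order may be chosen arbitrarily and independently for each $r$). *)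

From HB Require Import structures.
From mathcomp Require Import all_boot all_order all_algebra all_fingroup.
From mathcomp Require Import complex.
From mathcomp Require Import all_classical all_reals all_analysis.
Set Implicit Arguments. Unset Strict Implicit. Unset Printing Implicit Defensive.
Import Order.TTheory GRing.Theory Num.Theory.
Import numFieldNormedType.Exports.
Local Open Scope classical_set_scope.
Local Open Scope ring_scope.

(* The scalar field F ∈ {ℝ, ℂ}: [Fld R true] is R, [Fld R false] is R[i]. *)
Definition Fld (R : realType) (b : bool) : numFieldType :=
  if b then (R : numFieldType) else (R[i] : numFieldType).

Definition modF (R : realType) (b : bool) : Fld R b -> R :=
  match b as b' return Fld R b' -> R with
  | true => fun x : R => `|x|
  | false => fun z : R[i] => complex.Re `|z|
  end.

Definition vecnorm (R : realType) (b : bool) (n : nat)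
    (nu : 'cV[Fld R b]_n -> R) : Prop :=
  [/\ forall x, 0 <= nu x,
      forall x, nu x = 0 -> x = 0,
      forall (a : Fld R b) x, nu (a *: x) = modF a * nu x
    & forall x y, nu (x + y) <= nu x + nu y].

Definition pnorm (R : realType) (b : bool) (n : nat)
    (nu : 'cV[Fld R b]_n -> R) (H : {vspace 'cV[Fld R b]_n})
    (A : 'M[Fld R b]_n) : R :=
  sup [set nu (A *m x) / nu x | x in [set x | (x \in H) && (x != 0)]].

Definition Hinvariant (R : realType) (b : bool) (n : nat)
    (H : {vspace 'cV[Fld R b]_n}) (A : 'M[Fld R b]_n) : Prop :=
  forall x, x \in H -> A *m x \in H.

Definition mxprod (K : pzRingType) (n r : nat) (M : 'I_r -> 'M[K]_n) : 'M[K]_n :=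
  \big[@mulmx K n n n / 1%:M]_(k < r) M k.

(* General product C_{p,r}: with 0-based indexing, A' i = A_{i+1},
   s j = sigma(j+1) - 1 (s a bijection of nat), B' j = A' (s j) = B_{j+1};
   C_{p,r} is a product of B_{p+1},...,B_{p+r} = B' p, ..., B' (p+r-1),
   each used exactly once, in the order given by the permutation tau_r. *)
Definition genprod (K : pzRingType) (n : nat) (A : nat -> 'M[K]_n)
    (s : nat -> nat) (p : nat) (tau : forall r : nat, 'S_r) (r : nat) : 'M[K]_n :=
  mxprod (fun k : 'I_r => A (s (p + tau r k)%N)).

(* A vector norm on F^n dominates every coordinate (the unit sphere of R^m is
   compact, and C^n is R^(2n)), so the partial norms a_i of the A_i are finite
   and nu (C_{p,r} x) <= (prod_(k<r) a_(sigma(p+k))) nu x.  Since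
   a_i <= exp (u_i - v_i) with u_i = max(a_i,1) - 1 and v_i = 1 - min(a_i,1),
   that product is at most exp (sum_i u_i - sum_(k<r) v_(sigma(p+k))).  The
   first sum is finite; the second diverges because sigma(1..p+r) eventually
   contains any initial segment of N, and the p omitted indices carry v <= 1. *)

From HB Require Import structures.
From mathcomp Require Import all_boot all_order all_algebra all_fingroup.
From mathcomp Require Import complex.
From mathcomp Require Import all_classical all_reals all_analysis.
From mathcomp Require Import lra.
Set Implicit Arguments. Unset Strict Implicit. Unset Printing Implicit Defensive.
Import Order.TTheory GRing.Theory Num.Theory.
Import numFieldNormedType.Exports.
Local Open Scope classical_set_scope.
Local Open Scope ring_scope.

Lemma ler_subadditive_sum (V : nmodType) (R : numDomainType) (N : V -> R)
    I (r : seq I) (P : pred I) (F : I -> V) :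
  N 0 = 0 -> (forall x y, N (x + y) <= N x + N y) ->
  N (\sum_(i <- r | P i) F i) <= \sum_(i <- r | P i) N (F i).
Proof.
move=> N0 ND; apply: (big_ind2 (fun x t => N x <= t)); first by rewrite N0.
  by move=> x1 t1 x2 t2 le1 le2; apply: le_trans (ND _ _) (lerD le1 le2).
by [].
Qed.
Arguments ler_subadditive_sum {V R N I r P F}.

Lemma ler_mx_entry_norm {K : realDomainType} {m n} (x : 'M[K]_(m, n)) i j :
  `|x i j| <= `|x|.
Proof.
have /mapP[k _ ->] : `|x i j| \in [seq `|x y.1 y.2| | y : 'I_m * 'I_n].
  by apply/mapP; exists (i, j) => //=; rewrite mem_enum.
by rewrite [leRHS]/Num.Def.normr /= mx_normrE; apply/bigmax_geP; right; exists k.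
Qed.

Section RowNormEquivalence.
Variables (R : realType) (m : nat) (N : 'rV[R]_m -> R).
Hypotheses (N_ge0 : forall x, 0 <= N x) (N_eq0 : forall x, N x = 0 -> x = 0)
  (NZ : forall a x, N (a *: x) = `|a| * N x)
  (ND : forall x y, N (x + y) <= N x + N y).

Let N0 : N 0 = 0.
Proof. by have := NZ 0 0; rewrite scale0r normr0 mul0r. Qed.

Let NN x : N (- x) = N x.
Proof. by rewrite -scaleN1r NZ normrN normr1 mul1r. Qed.

Let K := \sum_(j < m) N (delta_mx 0 j).

Lemma norm_le_mx_norm x : N x <= K * `|x|.
Proof.
rewrite {1}(matrix_sum_delta x) big_ord1.
apply: le_trans (ler_subadditive_sum N0 ND) _.
rewrite /K mulr_suml; apply: ler_sum => j _.
by rewrite NZ mulrC ler_wpM2l // ler_mx_entry_norm.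
Qed.

Lemma continuous_norm : continuous N.
Proof.
have K_ge0 : 0 <= K by apply: sumr_ge0.
move=> x; apply/(@cvgrPdist_lt _ _ _ (nbhs x) (nbhs_filter x)) => e e_gt0.
have K1_gt0 : 0 < K + 1 by rewrite ltr_wpDl.
near=> y.
have dist_le : `|N x - N y| <= N (x - y).
  have := ND y (x - y); have := ND x (y - x).
  rewrite (addrC x (y - x)) (addrC y (x - y)) !subrK -[y - x]opprB NN => le1 le2.
  by rewrite ler_norml; apply/andP; split; lra.
apply: le_lt_trans dist_le (le_lt_trans (norm_le_mx_norm _) _).
have : `|x - y| < e / (K + 1) by near: y; apply: cvgr_dist_lt; rewrite ?divr_gt0.
rewrite ltr_pdivlMr // => lt_e; apply: le_lt_trans lt_e.
by rewrite mulrC ler_wpM2l // lerDl.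
Unshelve. all: by end_near. Qed.

Lemma mx_norm_le_norm : exists2 c, 0 < c & forall x, `|x| <= c * N x.
Proof.
pose S := [set x : 'rV[R]_m | `|x| = 1].
have normalize_in x : x != 0 -> `|x|^-1 *: x \in S.
  by move=> x0; rewrite inE /S /= mx_normZ normfV normr_id mulVf ?normr_eq0.
have [S0|S0] := pselect (S !=set0); last first.
  exists 1 => // x; have [->|x0] := eqVneq x 0; first by rewrite normr0 N0 mulr0.
  by exfalso; apply: S0; exists (`|x|^-1 *: x); have := normalize_in x x0; rewrite inE.
have S_compact : compact S.
  apply: bounded_closed_compact.
    by exists 1; split => // M M1 x Sx; rewrite /= (Sx : `|x| = 1) ltW.
  rewrite (_ : S = Num.norm @^-1` [set 1]) //.
  by apply: preimage_closed => [z _|]; [exact: norm_continuous | exact: closed_eq].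
have [z Sz min_z] := compact_EVT_min S0 S_compact (continuous_subspaceT continuous_norm).
have Nz_gt0 : 0 < N z.
  rewrite lt0r N_ge0 andbT; apply/eqP => /N_eq0 z0.
  by move: Sz; rewrite inE /S /= z0 normr0 => /esym/eqP; rewrite oner_eq0.
exists (N z)^-1; first by rewrite invr_gt0.
move=> x; have [->|x0] := eqVneq x 0; first by rewrite normr0 N0 mulr0.
have := min_z _ (normalize_in x x0); rewrite NZ normfV normr_id => le_z.
rewrite -(ler_pM2l Nz_gt0) mulrA mulfV ?gt_eqF // mul1r.
by rewrite -ler_pdivlMr ?normr_gt0 // mulrC.
Qed.

End RowNormEquivalence.

Section Modulus.
Variable R : realType.

Lemma modF_complexE (z : Fld R false) :
  modF z = Num.sqrt (complex.Re (z : R[i]) ^+ 2 + complex.Im (z : R[i]) ^+ 2).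
Proof. by rewrite /modF normc_def. Qed.

Lemma modF_complexC (z : Fld R false) : (`|z : R[i]| = (modF z)%:C)%C.
Proof. by rewrite /modF normc_def. Qed.

Lemma modF_ge0 b (x : Fld R b) : 0 <= modF x.
Proof. by case: b x => x; [exact: normr_ge0 | rewrite modF_complexE sqrtr_ge0]. Qed.

Lemma modF0 b : modF (0 : Fld R b) = 0.
Proof. by case: b; [exact: normr0 | rewrite modF_complexE /= expr0n /= addr0 sqrtr0]. Qed.

Lemma modFM b (x y : Fld R b) : modF (x * y) = modF x * modF y.
Proof.
case: b x y => x y; first exact: normrM.
by apply: (@complexI R); rewrite rmorphM /= -!modF_complexC normrM.
Qed.

Lemma ler_modFD b (x y : Fld R b) : modF (x + y) <= modF x + modF y.
Proof.
case: b x y => x y; first exact: ler_normD.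
by rewrite -lecR rmorphD /= -!modF_complexC ler_normD.
Qed.

Lemma modF_le_Re_Im (z : Fld R false) :
  modF z <= `|complex.Re (z : R[i])| + `|complex.Im (z : R[i])|.
Proof.
rewrite modF_complexE; set a := complex.Re _; set c := complex.Im _.
rewrite -[leRHS]ger0_norm ?addr_ge0 // -sqrtr_sqr ler_sqrt ?sqr_ge0 //.
rewrite -(real_normK (num_real a)) -(real_normK (num_real c)).
by have := normr_ge0 a; have := normr_ge0 c; nra.
Qed.

Lemma cvg0_modF b T (F : set_system T) {FF : Filter F} (f : T -> Fld R b) :
  (fun t => modF (f t)) @ F --> 0 -> f @ F --> 0.
Proof.
move=> /cvgr0Pnorm_lt modF_lt; apply/cvgr0Pnorm_lt; case: b f modF_lt => f modF_lt e.
  move=> /modF_lt; apply: filterS => t /=; rewrite ger0_norm //; exact: modF_ge0.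
rewrite ltcE /= => /andP[/eqP Im_e Re_e_gt0].
apply: filterS (modF_lt _ Re_e_gt0) => t.
by rewrite ger0_norm ?modF_ge0 // modF_complexC ltcE /= -Im_e eqxx.
Qed.

End Modulus.

Section CoordinateBound.
Variables (R : realType) (n : nat).
Local Open Scope complex_scope.

Definition complexify (v : 'rV[R]_(n + n)) : 'cV[R[i]]_n :=
  \col_j (lsubmx v 0 j +i* rsubmx v 0 j).

Definition realify (x : 'cV[R[i]]_n) : 'rV[R]_(n + n) :=
  row_mx (\row_j complex.Re (x j 0)) (\row_j complex.Im (x j 0)).

Lemma realifyK : cancel realify complexify.
Proof.
move=> x; apply/matrixP => i k.
by rewrite /complexify /realify row_mxKl row_mxKr !mxE (ord1 k); case: (x i 0).
Qed.

Lemma complexifyZ a v : complexify (a *: v) = a%:C *: complexify v.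
Proof.
apply/matrixP => i j; rewrite !mxE /=.
by apply/eqP; rewrite eq_complex /= !mul0r subr0 addr0 !eqxx.
Qed.

Lemma complexifyD v w : complexify (v + w) = complexify v + complexify w.
Proof. by apply/matrixP => i j; rewrite !mxE. Qed.

Lemma complexify_eq0 v : complexify v = 0 -> v = 0.
Proof.
move=> v0; rewrite -(hsubmxK v).
have /matrixP coord0 := v0; have [l0 r0] : lsubmx v = 0 /\ rsubmx v = 0.
  by split; apply/rowP => k; have := coord0 k 0; rewrite !mxE => -[].
by rewrite l0 r0 row_mx0.
Qed.

Lemma vecnorm_coord_le_real (nu : 'cV[Fld R true]_n -> R) : vecnorm nu ->
  exists2 c : R, 0 < c & forall (x : 'cV_n) j, modF (x j 0) <= c * nu x.
Proof.
case=> nu_ge0 nu_eq0 nuZ nuD.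
have [c c_gt0 le_c] : exists2 c, 0 < c & forall v : 'rV[R]_n, `|v| <= c * nu v^T.
  apply: mx_norm_le_norm => [v|v /nu_eq0 v0|a v|v w]; first exact: nu_ge0.
  - by rewrite -(trmxK v) v0 trmx0.
  - by rewrite linearZ nuZ.
  - by rewrite linearD nuD.
exists c => // x j; have := le_c x^T; rewrite trmxK; apply: le_trans.
by have := ler_mx_entry_norm x^T 0 j; rewrite mxE.
Qed.

Lemma vecnorm_coord_le_complex (nu : 'cV[Fld R false]_n -> R) : vecnorm nu ->
  exists2 c : R, 0 < c & forall (x : 'cV_n) j, modF (x j 0) <= c * nu x.
Proof.
case=> nu_ge0 nu_eq0 nuZ nuD.
have modF_real (a : R) : modF (a%:C : Fld R false) = `|a|.
  by rewrite modF_complexE /= expr0n /= addr0 sqrtr_sqr.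
have [c c_gt0 le_c] : exists2 c, 0 < c &
    forall v : 'rV[R]_(n + n), `|v| <= c * nu (complexify v).
  apply: mx_norm_le_norm => [v|v /nu_eq0 /complexify_eq0 //|a v|v w].
  - exact: nu_ge0.
  - by rewrite complexifyZ nuZ modF_real.
  - by rewrite complexifyD nuD.
exists (c *+ 2) => [|x j]; first by rewrite mulrn_wgt0.
have := le_c (realify x); rewrite realifyK => le_x.
apply: le_trans (modF_le_Re_Im (x j 0)) _; rewrite mulrnAl mulr2n.
apply: lerD; apply: le_trans le_x.
  by have := ler_mx_entry_norm (realify x) 0 (lshift n j); rewrite row_mxEl mxE.
by have := ler_mx_entry_norm (realify x) 0 (rshift n j); rewrite row_mxEr mxE.
Qed.

End CoordinateBound.

Lemma vecnorm_coord_le (R : realType) b n (nu : 'cV[Fld R b]_n -> R) : vecnorm nu ->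
  exists2 c : R, 0 < c & forall (x : 'cV_n) j, modF (x j 0) <= c * nu x.
Proof.
by case: b nu; [exact: vecnorm_coord_le_real | exact: vecnorm_coord_le_complex].
Qed.

Lemma mxprod_recl (K : pzRingType) n r (M : 'I_r.+1 -> 'M[K]_n) :
  mxprod M = M ord0 *m mxprod (fun k => M (lift ord0 k)).
Proof. exact: (@big_ord_recl _ _ (@mulmx _ n n n)). Qed.

Section PartialNorm.
Variables (R : realType) (b : bool) (n : nat) (nu : 'cV[Fld R b]_n -> R).
Variable H : {vspace 'cV[Fld R b]_n}.
Hypothesis nu_norm : vecnorm nu.

Lemma vecnorm0 : nu 0 = 0.
Proof. by case: nu_norm => _ _ nuZ _; rewrite -(scale0r 0) nuZ modF0 mul0r. Qed.

Lemma vecnorm_gt0 x : x != 0 -> 0 < nu x.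
Proof.
case: nu_norm => nu_ge0 nu_eq0 _ _ x0; rewrite lt0r nu_ge0 andbT.
by apply: contra_neqN x0 => /eqP/nu_eq0->.
Qed.

Lemma vecnorm_le_coord y : nu y <= \sum_(j < n) modF (y j 0) * nu (delta_mx j 0).
Proof.
have [_ _ nuZ nuD] := nu_norm.
rewrite {1}(matrix_sum_delta y); under eq_bigr => j _ do rewrite big_ord1.
apply: le_trans (ler_subadditive_sum vecnorm0 nuD) _.
by apply: ler_sum => j _; rewrite nuZ.
Qed.

Lemma vecnorm_mulmx_le (B : 'M[Fld R b]_n) : exists M, forall y, nu (B *m y) <= M * nu y.
Proof.
have [nu_ge0 _ _ _] := nu_norm; have [c _ coord_le] := vecnorm_coord_le nu_norm.
exists (\sum_(j < n) (\sum_(k < n) modF (B j k) * c) * nu (delta_mx j 0)) => y.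
apply: le_trans (vecnorm_le_coord _) _; rewrite mulr_suml; apply: ler_sum => j _.
rewrite mulrAC ler_wpM2r // mulr_suml mxE.
apply: le_trans (ler_subadditive_sum (modF0 _ _) (@ler_modFD R b)) _.
by apply: ler_sum => k _; rewrite modFM -mulrA ler_wpM2l ?modF_ge0.
Qed.

Let ratios B := [set nu (B *m x) / nu x | x in [set x | (x \in H) && (x != 0)]].

Lemma has_ubound_pnorm_ratios B : has_ubound (ratios B).
Proof.
have [M le_M] := vecnorm_mulmx_le B.
by exists M => _ [x /andP[_ x0] <-]; rewrite ler_pdivrMr ?vecnorm_gt0.
Qed.

Lemma pnorm_ratio_le B t : ratios B t -> t <= pnorm nu H B.
Proof.
move=> Bt; rewrite /pnorm -/(ratios B).
exact: (sup_upper_bound (conj (ex_intro _ t Bt) (has_ubound_pnorm_ratios B)) Bt).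
Qed.

(* When [H = 0] the set of ratios is empty and [pnorm] is [sup set0 = 0]. *)
Lemma pnorm_ge0 B : 0 <= pnorm nu H B.
Proof.
have [[t Bt]|/nonemptyPn empty] := pselect (ratios B !=set0); last first.
  by rewrite /pnorm -/(ratios B) empty sup0.
apply: le_trans (pnorm_ratio_le Bt).
by case: Bt => x _ <-; rewrite divr_ge0 //; case: nu_norm.
Qed.

Lemma ler_pnorm B y : y \in H -> nu (B *m y) <= pnorm nu H B * nu y.
Proof.
move=> yH; have [->|y0] := eqVneq y 0; first by rewrite mulmx0 vecnorm0 mulr0.
rewrite -ler_pdivrMr ?vecnorm_gt0 //; apply: pnorm_ratio_le.
by exists y => //=; rewrite yH y0.
Qed.

Lemma Hinvariant_mxprod r (M : 'I_r -> 'M[Fld R b]_n) :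
  (forall k, Hinvariant H (M k)) -> Hinvariant H (mxprod M).
Proof.
elim: r M => [|r IH] M M_inv y yH; first by rewrite /mxprod big_ord0 mul1mx.
have M'_inv k : Hinvariant H (M (lift ord0 k)) := M_inv _.
by rewrite mxprod_recl -mulmxA; apply: M_inv; apply: IH M'_inv _ yH.
Qed.

Lemma ler_mxprod_pnorm r (M : 'I_r -> 'M[Fld R b]_n) y :
  (forall k, Hinvariant H (M k)) -> y \in H ->
  nu (mxprod M *m y) <= (\prod_(k < r) pnorm nu H (M k)) * nu y.
Proof.
elim: r M => [|r IH] M M_inv yH; first by rewrite /mxprod !big_ord0 mul1mx mul1r.
have M'_inv k : Hinvariant H (M (lift ord0 k)) := M_inv _.
rewrite mxprod_recl -mulmxA big_ord_recl -mulrA.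
apply: le_trans (ler_pnorm _ (Hinvariant_mxprod M'_inv yH)) _.
by rewrite ler_wpM2l ?pnorm_ge0 // IH.
Qed.

End PartialNorm.

Lemma ler_sum_uniq_subset (R : numDomainType) (I : eqType) (s s' : seq I) (F : I -> R) :
  uniq s -> uniq s' -> {subset s <= s'} -> (forall i, 0 <= F i) ->
  \sum_(i <- s) F i <= \sum_(i <- s') F i.
Proof.
move=> s_uniq s'_uniq ss' F_ge0.
rewrite [leRHS](bigID (mem s)) /=.
have -> : \sum_(i <- s' | i \in s) F i = \sum_(i <- s) F i.
  rewrite -big_filter; apply/perm_big/uniq_perm; rewrite ?filter_uniq // => i.
  by rewrite mem_filter andb_idr //; apply: ss'.
by rewrite lerDl sumr_ge0.
Qed.

Section SeriesRearrangement.
Variables (R : realType) (u : nat -> R).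
Hypothesis u_ge0 : forall i, 0 <= u i.

Let series_nd : nondecreasing_seq (series u).
Proof. by apply: nondecreasing_series => i _ _; exact: u_ge0. Qed.

Lemma sum_inj_le_limn (f : nat -> nat) r : injective f -> cvgn (series u) ->
  \sum_(k < r) u (f k) <= limn (series u).
Proof.
move=> f_inj u_cvg; pose N := (\max_(k < r) f k)%N.+1.
apply: le_trans (nondecreasing_cvgn_le series_nd u_cvg N).
rewrite -(big_mkord xpredT (u \o f)) -(big_map f xpredT u) /series /=.
apply: ler_sum_uniq_subset => //; rewrite ?map_inj_uniq ?iota_uniq //.
move=> i /mapP[k]; rewrite mem_index_iota => /andP[_ lt_kr] ->.
rewrite mem_index_iota leq0n ltnS.
exact: (@leq_bigmax _ (fun i : 'I_r => f i) (Ordinal lt_kr)).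
Qed.

Lemma dvg_sum_bij_gt (s : nat -> nat) (M : R) : bijective s -> ~ cvgn (series u) ->
  \forall r \near \oo, M < \sum_(k < r) u (s k).
Proof.
move=> [g sK gK] u_dvg; have s_inj := can_inj sK.
have /cvgryPgt/(_ M)[N _ lt_N] := nondecreasing_dvgn_lt series_nd u_dvg.
exists (\max_(i < N) g i)%N.+1 => // r /= le_r.
apply: lt_le_trans (lt_N N (leqnn N)) _.
rewrite -(big_mkord xpredT (u \o s)) -(big_map s xpredT u) /series /=.
apply: ler_sum_uniq_subset => //; rewrite ?map_inj_uniq ?iota_uniq //.
move=> i; rewrite mem_index_iota => /andP[_ lt_iN].
rewrite -(gK i) map_f // mem_index_iota leq0n.
apply: leq_trans le_r; rewrite ltnS.
exact: (@leq_bigmax _ (fun i : 'I_N => g i) (Ordinal lt_iN)).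
Qed.

End SeriesRearrangement.

Lemma le_expR_excess_deficit (R : realType) (x : R) :
  x <= expR ((Num.max x 1 - 1) - (1 - Num.min x 1)).
Proof.
have le1Dx := @expR_ge1Dx R; case: (leP 1 x) => _.
  by rewrite subrr subr0; have := le1Dx (x - 1); rewrite addrC subrK.
by rewrite subrr sub0r; have := le1Dx (- (1 - x)); rewrite opprB addrC subrK.
Qed.

Lemma prod_shift_bij_cvg0 (R : realType) (a : nat -> R) (s : nat -> nat) p :
  (forall i, 0 <= a i) -> bijective s ->
  cvgn (series (fun i => Num.max (a i) 1 - 1)) ->
  ~ cvgn (series (fun i => 1 - Num.min (a i) 1)) ->
  (fun r => \prod_(k < r) a (s (p + k)%N)) @ \oo --> 0.
Proof.
set u := fun i => _ - 1; set v := fun i => 1 - _ => a_ge0 s_bij u_cvg v_dvg.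
have u_ge0 i : 0 <= u i by rewrite subr_ge0 le_max lexx orbT.
have v_ge0 i : 0 <= v i by rewrite subr_ge0 ge_min lexx orbT.
have v_le1 i : v i <= 1 by rewrite lerBlDr lerDl le_min a_ge0 ler01.
have s_inj : injective s by case: s_bij => g sK _; exact: can_inj sK.
apply/cvgr0Pnorm_lt => e e_gt0.
have [N _ lt_N] := dvg_sum_bij_gt v_ge0 (limn (series u) + p%:R - ln e) s_bij v_dvg.
exists N => // r /= le_Nr.
have u_le : \sum_(k < r) u (s (p + k)%N) <= limn (series u).
  apply: (sum_inj_le_limn u_ge0 (f := fun k => s (p + k)%N)) => //.
  by move=> k1 k2 /s_inj/addnI.
have v_head : \sum_(k < p) v (s k) <= p%:R.
  have -> : p%:R = \sum_(k < p) (1 : R) by rewrite sumr_const card_ord.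
  by apply: ler_sum => k _; exact: v_le1.
have := lt_N (p + r)%N (leq_trans le_Nr (leq_addl _ _)).
rewrite big_split_ord /= => v_gt.
have prod_le : \prod_(k < r) a (s (p + k)%N) <=
    \prod_(k < r) expR (u (s (p + k)%N) - v (s (p + k)%N)).
  by apply: ler_prod => k _; rewrite a_ge0 le_expR_excess_deficit.
rewrite ger0_norm ?prodr_ge0 //; apply: le_lt_trans prod_le _.
rewrite -expR_sum sumrB -[e]lnK ?posrE // ltr_expR; lra.
Qed.

Theorem corollary3p3 (R : realType) (b : bool) (n : nat)
    (A : nat -> 'M[Fld R b]_n) (H : {vspace 'cV[Fld R b]_n})
    (nu : 'cV[Fld R b]_n -> R) :
  (forall i, Hinvariant H (A i)) ->
  vecnorm nu ->
  cvgn (series (fun i => Num.max (pnorm nu H (A i)) 1 - 1)) ->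
  ~ cvgn (series (fun i => 1 - Num.min (pnorm nu H (A i)) 1)) ->
  forall (s : nat -> nat), bijective s ->
  forall (p : nat) (tau : forall r : nat, 'S_r) (x : 'cV[Fld R b]_n),
  x \in H ->
  forall i : 'I_n,
    (fun r => (genprod A s p tau r *m x) i 0) @ \oo --> (0 : Fld R b).
Proof.
move=> A_inv nu_norm excess_cvg deficit_dvg s s_bij p tau x xH i.
have [c c_gt0 coord_le] := vecnorm_coord_le nu_norm.
pose a k := pnorm nu H (A k).
have a_ge0 k : 0 <= a k by exact: pnorm_ge0.
have prod_cvg0 := prod_shift_bij_cvg0 p a_ge0 s_bij excess_cvg deficit_dvg.
pose bound r := c * ((\prod_(k < r) a (s (p + k)%N)) * nu x).
apply: cvg0_modF; apply: (squeeze_cvgr (f := cst 0) (h := bound)).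
- apply: nearW => r; rewrite modF_ge0 /=.
  apply: le_trans (coord_le _ i) _; rewrite ler_pM2l //.
  have -> : \prod_(k < r) a (s (p + k)%N) = \prod_(k < r) a (s (p + tau r k)%N).
    exact: (reindex_inj (@perm_inj _ (tau r))).
  exact: ler_mxprod_pnorm.
- exact: cvg_cst.
- by rewrite /bound -(mulr0 c) -(mul0r (nu x)); apply: cvgMr; apply: cvgMl.
Qed.
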